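(* Let $n\in\{4,5\}$ and fix a triangulation $\tau$ of a convex $n$-gon by diagonals. Let $I$ be the set of marked points consisting of one point in each triangle and two points on each diagonal (none on the sides of the $n$-gon), and let $Q$ be the quiver on $I$ defined in the context (equivalently the skew-symmetric matrix $\varepsilon$). Then for $n=4$, $Q$ is mutation equivalent to a quiver whose underlying graph is the Dynkin diagram $D_4$, and for $n=5$, $Q$ is mutation equivalent to a quiver whose underlying graph is the Dynkin diagram $E_7$. Consequently, the cluster $\mathcal X$-space structures on the moduli spaces of configurations of $4$, resp. $5$, flags in $\mathbb{RP}^2$ given by these coordinates are of finite type $D_4$, resp. $E_7$.
   Context: Quiver on $I$: in each triangle of $\tau$ with vertices $u,v,w$ in counterclockwise order, let $c$ be its central marked point and, for a side $xy$ of the triangle that is a diagonal, let $p_{xy}$ be the marked point on it nearer to $x$. Draw the arrows $c\to p_{uv}$ and $p_{vu}\to c$ for each of the three sides $(u,v),(v,w),(w,u)$ traversed counterclockwise, and at each vertex $v$ with preceding vertex $u$ and following vertex $w$ draw the arrow $p_{vw}\to p_{vu}$; arrows involving a point on a side of the $n$-gon (not a marked point) are omitted. Set $\varepsilon_{ij}$ = (number of arrows $i\to j$) $-$ (number of arrows $j\to i$), summed over all triangles. Mutation at $k$ replaces $\varepsilon$ by $\varepsilon'_{ij}=-\varepsilon_{ij}$ if $k\in\{i,j\}$ and $\varepsilon'_{ij}=\varepsilon_{ij}+\varepsilon_{ik}\max\{0,\operatorname{sgn}(\varepsilon_{ik})\varepsilon_{kj}\}$ otherwise; two quivers are mutation equivalent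 if related by a sequence of mutations and relabelings. The coordinates on configurations of $n$ flags (modulo $PGL_3$) are the triple ratios of the flags at the vertices of the triangles and the cross-ratios at the diagonals, as in the parametrization of $\mathcal P_3^n$. *)

From HB Require Import structures.
From mathcomp Require Import all_boot all_order all_algebra.
Set Implicit Arguments. Unset Strict Implicit. Unset Printing Implicit Defensive.
Import Order.TTheory GRing.Theory Num.Theory.
Local Open Scope ring_scope.

Record quiver := Quiver { qT : finType; qe : qT -> qT -> int }.

Definition mutate (T : finType) (k : T) (e : T -> T -> int) : T -> T -> int :=
  fun i j => if (i == k) || (j == k) then - e i j
             else e i j + e i k * Num.max 0 (sgz (e i k) * e k j).

Inductive mut_equiv : quiver -> quiver -> Prop :=
| me_refl Q : mut_equiv Q Q
| me_mutate (T : finType) (e : T -> T -> int) (k : T) :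
    mut_equiv (Quiver e) (Quiver (mutate k e))
| me_relabel (T T' : finType) (e : T -> T -> int) (f : T' -> T) :
    bijective f -> mut_equiv (Quiver e) (Quiver (fun i j => e (f i) (f j)))
| me_sym Q1 Q2 : mut_equiv Q1 Q2 -> mut_equiv Q2 Q1
| me_trans Q1 Q2 Q3 : mut_equiv Q1 Q2 -> mut_equiv Q2 Q3 -> mut_equiv Q1 Q3.

Definition has_underlying_graph (m : nat) (edge : rel 'I_m)
  (e : 'I_m -> 'I_m -> int) : Prop :=
  forall i j, e i j = - e j i /\ `|e i j| = (edge i j : nat)%:Z.

Definition edge_of_list (m : nat) (s : seq (nat * nat)) : rel 'I_m :=
  fun i j => ((val i, val j) \in s) || ((val j, val i) \in s).

Definition D4_edge : rel 'I_4 := edge_of_list [:: (0,1); (0,2); (0,3)]%N.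
Definition E7_edge : rel 'I_7 :=
  edge_of_list [:: (0,1); (1,2); (2,3); (3,4); (4,5); (2,6)]%N.

(* Vertices of the n-gon: 'I_n, labelled 0,...,n-1 counterclockwise. *)

Definition adjacent (n : nat) (a b : 'I_n) : bool :=
  (val b == (val a).+1 %% n)%N || (val a == (val b).+1 %% n)%N.

Definition is_diag (n : nat) (a b : 'I_n) : bool := (a != b) && ~~ adjacent a b.

(* diagonals {a,b}, {c,d} with a<b, c<d cross in their interiors *)
Definition crossing (n : nat) (p q : 'I_n * 'I_n) : bool :=
  let a := val p.1 in let b := val p.2 in let c := val q.1 in let d := val q.2 in
  [&& a < c, c < b & b < d]%N || [&& c < a, a < d & d < b]%N.

(* A triangulation: a maximal set of pairwise non-crossing diagonals,
   each diagonal {a,b} stored once as the pair (a,b) with a < b. *)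
Definition triangulation (n : nat) (D : {set 'I_n * 'I_n}) : Prop :=
  [/\ (forall p, p \in D -> (val p.1 < val p.2)%N && is_diag p.1 p.2),
      (forall p q, p \in D -> q \in D -> ~~ crossing p q) &
      (forall a b : 'I_n, (val a < val b)%N -> is_diag a b -> (a, b) \notin D ->
         exists2 q, q \in D & crossing (a, b) q)].

Definition tedge (n : nat) (D : {set 'I_n * 'I_n}) (x y : 'I_n) : bool :=
  [|| adjacent x y, (x, y) \in D | (y, x) \in D].

(* triangles of tau, as (u,v,w) with u<v<w, i.e. in counterclockwise order *)
Definition is_tri (n : nat) (D : {set 'I_n * 'I_n}) (t : 'I_n * 'I_n * 'I_n) : bool :=
  let: (u, v, w) := t in
  [&& (val u < val v)%N, (val v < val w)%N, tedge D u v, tedge D v w & tedge D u w].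

(* candidate points: central point c_t of a triple t (inl t), and the point
   p_{xy} on segment xy nearer to x (inr (x,y)). *)
Definition node (n : nat) : finType := ('I_n * 'I_n * 'I_n + 'I_n * 'I_n)%type.

Definition marked (n : nat) (D : {set 'I_n * 'I_n}) (x : node n) : bool :=
  match x with
  | inl t => is_tri D t
  | inr (a, b) => ((a, b) \in D) || ((b, a) \in D)
  end.

Definition tri_arrows (n : nat) (t : 'I_n * 'I_n * 'I_n) : seq (node n * node n) :=
  let: (u, v, w) := t in
  let c : node n := inl t in
  let p (x y : 'I_n) : node n := inr (x, y) in
  [:: (c, p u v); (p v u, c); (c, p v w); (p w v, c); (c, p w u); (p u w, c);
      (p u v, p u w); (p v w, p v u); (p w u, p w v)].

(* eps_{ij} = #(arrows i -> j) - #(arrows j -> i), summed over triangles.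
   Arrows with an unmarked endpoint never contribute once restricted to I. *)
Definition eps (n : nat) (D : {set 'I_n * 'I_n}) (i j : node n) : int :=
  \sum_(t | is_tri D t)
     ((count_mem (i, j) (tri_arrows t))%:Z - (count_mem (j, i) (tri_arrows t))%:Z).

Definition markedT (n : nat) (D : {set 'I_n * 'I_n}) : finType :=
  {x : node n | marked D x}.

Definition tau_quiver (n : nat) (D : {set 'I_n * 'I_n}) : quiver :=
  @Quiver (markedT D) (fun i j => eps D (val i) (val j)).

(* For n = 4, 5 the theorem is a finite computation.  A triangulation is
   determined by the set of diagonals it contains, so there are finitely many
   of them, which we enumerate as bit vectors over the n(n-3)/2 diagonals.
   For each triangulation the quiver on the marked points has 4, resp. 7,
   vertices, and a short sequence of mutations followed by a relabelling turns
   it into an orientation of D4, resp. E7; these certificates are checked by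
   evaluation in the kernel. *)

From mathcomp Require Import all_boot all_order all_algebra.
From Stdlib Require Import FunctionalExtensionality.
Set Implicit Arguments. Unset Strict Implicit. Unset Printing Implicit Defensive.
Local Open Scope ring_scope.

Section OrdinalSequences.
Variable n : nat.

(* [ord_enum] is built with [insub], which is stuck under [vm_compute] because
   [idP] is opaque; [insub_eq] reduces. *)
Definition ord_seq : seq 'I_n := pmap (insub_eq _) (iota 0 n).

Lemma ord_seqE : ord_seq = ord_enum n.
Proof. exact: (eq_pmap (insub_eqE _)). Qed.

Lemma mem_ord_seq i : i \in ord_seq.
Proof. by rewrite ord_seqE mem_ord_enum. Qed.

Lemma ord_seq_uniq : uniq ord_seq.
Proof. by rewrite ord_seqE ord_enum_uniq. Qed.

Lemma size_ord_seq : size ord_seq = n.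
Proof. by rewrite -(size_map val) ord_seqE val_ord_enum size_iota. Qed.

Lemma nth_ord_seq (i0 i : 'I_n) : nth i0 ord_seq i = i.
Proof.
apply: val_inj; rewrite -(nth_map i0 (val i0)) ?size_ord_seq //.
by rewrite ord_seqE val_ord_enum nth_iota.
Qed.

Definition ord_pairs : seq ('I_n * 'I_n) := [seq (a, b) | a <- ord_seq, b <- ord_seq].

Definition ord_triples : seq ('I_n * 'I_n * 'I_n) :=
  [seq (p, c) | p <- ord_pairs, c <- ord_seq].

Definition node_seq : seq (node n) := map inl ord_triples ++ map inr ord_pairs.

Lemma mem_ord_pairs p : p \in ord_pairs.
Proof. by case: p => a b; apply: allpairs_f; apply: mem_ord_seq. Qed.

Lemma mem_ord_triples t : t \in ord_triples.
Proof. by case: t => p c; apply: allpairs_f; [apply: mem_ord_pairs | apply: mem_ord_seq]. Qed.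

Lemma mem_node_seq x : x \in node_seq.
Proof.
rewrite mem_cat; case: x => y; apply/orP; [left | right]; apply: map_f;
  [exact: mem_ord_triples | exact: mem_ord_pairs].
Qed.

Lemma ord_pairs_uniq : uniq ord_pairs.
Proof. by apply: allpairs_uniq; rewrite ?ord_seq_uniq // => -[? ?] [? ?]. Qed.

Lemma ord_triples_uniq : uniq ord_triples.
Proof.
by apply: allpairs_uniq; rewrite ?ord_pairs_uniq ?ord_seq_uniq // => -[? ?] [? ?].
Qed.

Lemma node_seq_uniq : uniq node_seq.
Proof.
rewrite cat_uniq !map_inj_uniq ?ord_triples_uniq ?ord_pairs_uniq /=;
  try by move=> ? ? [].
by rewrite andbT; apply/hasPn => _ /mapP[p _ ->]; apply/mapP => -[].
Qed.

End OrdinalSequences.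

Lemma mut_equiv_relabel_inj (T T' : finType) (e : T -> T -> int) (f : T' -> T) :
  injective f -> (#|T| <= #|T'|)%N ->
  mut_equiv (Quiver e) (Quiver (fun i j => e (f i) (f j))).
Proof. by move=> finj /(inj_card_bij finj); apply: me_relabel. Qed.

Section IntegerTables.
Variable m : nat.

Definition table (M : seq (seq int)) (i j : 'I_m) : int := nth 0 (nth [::] M i) j.

Definition table_of (e : 'I_m -> 'I_m -> int) : seq (seq int) :=
  [seq [seq e i j | j <- ord_seq m] | i <- ord_seq m].

Lemma table_ofK : cancel table_of table.
Proof.
move=> e; apply: functional_extensionality => i; apply: functional_extensionality => j.
rewrite /table (nth_map i) ?size_ord_seq // (nth_map j) ?size_ord_seq //.
by rewrite !nth_ord_seq.
Qed.

Definition mutate_table (M : seq (seq int)) (ks : seq 'I_m) : seq (seq int) :=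
  foldl (fun M k => table_of (mutate k (table M))) M ks.

Lemma mut_equiv_mutate_table M ks :
  mut_equiv (Quiver (table M)) (Quiver (table (mutate_table M ks))).
Proof.
elim: ks M => [|k ks IH] M /=; first exact: me_refl.
by apply: me_trans (IH _); rewrite table_ofK; apply: me_mutate.
Qed.

Definition relabel_seq (s : seq 'I_m) (e : 'I_m -> 'I_m -> int) (i j : 'I_m) : int :=
  e (nth i s i) (nth j s j).

Lemma mut_equiv_relabel_seq s e :
  uniq s -> size s = m -> mut_equiv (Quiver e) (Quiver (relabel_seq s e)).
Proof.
move=> s_uniq s_size; apply: mut_equiv_relabel_inj => [i j|//].
rewrite (set_nth_default i j) ?s_size // => /eqP.
by rewrite nth_uniq ?s_size // => /eqP/val_inj.
Qed.

Definition has_underlying_graphb (edge : rel 'I_m) (e : 'I_m -> 'I_m -> int) : bool :=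
  all (fun i => all (fun j => (e i j == - e j i) && (`|e i j| == (edge i j : nat)%:Z))
                    (ord_seq m)) (ord_seq m).

Lemma has_underlying_graphP edge e :
  reflect (has_underlying_graph edge e) (has_underlying_graphb edge e).
Proof.
apply: (iffP allP) => [graph_e i j | graph_e i _].
  by have /allP/(_ j (mem_ord_seq _))/andP[/eqP ? /eqP ?] := graph_e i (mem_ord_seq _).
by apply/allP => j _; have [-> ->] := graph_e i j; rewrite !eqxx.
Qed.

End IntegerTables.

(* Computable versions of [tedge], [is_tri] and [marked], in which the set of
   diagonals is an arbitrary predicate; for [inD := [in D]] they are
   convertible to the originals. *)
Section DiagonalPredicate.
Variables (n : nat) (inD : pred ('I_n * 'I_n)).

Definition tedgeP (x y : 'I_n) : bool := [|| adjacent x y, inD (x, y) | inD (y, x)].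

Definition is_triP (t : 'I_n * 'I_n * 'I_n) : bool :=
  let: (u, v, w) := t in
  [&& (val u < val v)%N, (val v < val w)%N, tedgeP u v, tedgeP v w & tedgeP u w].

Definition markedP (x : node n) : bool :=
  match x with
  | inl t => is_triP t
  | inr (a, b) => inD (a, b) || inD (b, a)
  end.

Definition arrow_balance (i j : node n) (t : 'I_n * 'I_n * 'I_n) : int :=
  (count_mem (i, j) (tri_arrows t))%:Z - (count_mem (j, i) (tri_arrows t))%:Z.

Definition triangles : seq ('I_n * 'I_n * 'I_n) := [seq t <- ord_triples n | is_triP t].

Definition marked_seq : seq (node n) := [seq x <- node_seq n | markedP x].

(* The [let]s make [vm_compute] evaluate [marked_seq] and [triangles] only once. *)
Definition marked_table : seq (seq int) :=
  let L := marked_seq in let Ts := triangles in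
  [seq [seq foldr +%R 0 [seq arrow_balance x y t | t <- Ts] | y <- L] | x <- L].

End DiagonalPredicate.

Lemma eps_triangles n (D : {set 'I_n * 'I_n}) i j :
  eps D i j = foldr +%R 0 [seq arrow_balance i j t | t <- triangles [in D]].
Proof.
rewrite foldrE big_map big_filter /eps (perm_big (ord_triples n)) //.
apply: uniq_perm; [exact: index_enum_uniq | exact: ord_triples_uniq |].
by move=> t; rewrite mem_index_enum mem_ord_triples.
Qed.

Lemma tau_quiver_mut_equiv_table n (D : {set 'I_n * 'I_n}) m :
  size (marked_seq [in D]) = m ->
  mut_equiv (tau_quiver D) (Quiver (@table m (marked_table [in D]))).
Proof.
move=> size_marked; set L := marked_seq [in D].
have marked_L k : marked D (tnth (in_tuple L) k).
  by have := mem_tnth k (in_tuple L); rewrite memtE mem_filter => /andP[].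
pose f (i : 'I_m) : markedT D := Sub _ (marked_L (cast_ord (esym size_marked) i)).
have val_f i x0 : val (f i) = nth x0 L i by rewrite /= (tnth_nth x0).
have f_inj : injective f.
  have /tuple_uniqP tnth_inj : uniq (in_tuple L) := filter_uniq _ (node_seq_uniq n).
  by move=> i j /(congr1 val)/tnth_inj/cast_ord_inj.
have card_marked : (#|markedT D| <= #|'I_m|)%N.
  rewrite card_ord card_sig -size_marked (leq_trans _ (card_size L)) //.
  apply/subset_leq_card/subsetP => x; rewrite inE => marked_x.
  by rewrite mem_filter mem_node_seq andbT.
apply: me_trans (mut_equiv_relabel_inj _ f_inj card_marked) _.
suff -> : (fun i j => eps D (val (f i)) (val (f j))) = table (marked_table [in D]).
  exact: me_refl.
apply: functional_extensionality => i; apply: functional_extensionality => j.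
rewrite !eps_triangles /table /marked_table /=.
rewrite (nth_map (val (f i))) ?size_marked // (nth_map (val (f j))) ?size_marked //.
by rewrite -!val_f.
Qed.

Definition ords m (s : seq nat) : seq 'I_m := pmap (insub_eq _) s.

(* A certificate [(ks, perm)]: mutate the table at the vertices [ks] in turn,
   then let new vertex [i] be old vertex [nth i perm i]. *)
Definition certifies n m (inD : pred ('I_n * 'I_n)) (edge : rel 'I_m)
    (c : seq nat * seq nat) : bool :=
  let: (ks, perm) := c in
  let P := @ords m perm in
  [&& size (marked_seq inD) == m, uniq P, size P == m &
      has_underlying_graphb edge
        (relabel_seq P (table (mutate_table (marked_table inD) (@ords m ks))))].

Lemma certifies_mut_equiv n m (D : {set 'I_n * 'I_n}) (edge : rel 'I_m) c :
  certifies [in D] edge c ->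
  exists e, has_underlying_graph edge e /\ mut_equiv (tau_quiver D) (Quiver e).
Proof.
case: c => ks perm /and4P[/eqP size_marked P_uniq /eqP size_P /has_underlying_graphP graph_e].
eexists; split; first exact: graph_e.
apply: me_trans (tau_quiver_mut_equiv_table size_marked) _.
apply: me_trans (mut_equiv_mutate_table _ _) _.
exact: mut_equiv_relabel_seq.
Qed.

Definition diagonals n : seq ('I_n * 'I_n) :=
  [seq p <- ord_pairs n | (val p.1 < val p.2)%N && is_diag p.1 p.2].

Definition triangulationb n (inD : pred ('I_n * 'I_n)) : bool :=
  all (fun p => all (fun q => ~~ [&& inD p, inD q & crossing p q]) (ord_pairs n))
      (ord_pairs n) &&
  all (fun p => inD p || has (fun q => inD q && crossing p q) (ord_pairs n)) (diagonals n).

Lemma triangulation_triangulationb n (D : {set 'I_n * 'I_n}) :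
  triangulation D -> triangulationb [in D].
Proof.
case=> _ D_noncrossing D_maximal; apply/andP; split; apply/allP => p.
  move=> _; apply/allP => q _; apply/negP => /and3P[pD qD].
  exact/negP/D_noncrossing.
case: p => a b; rewrite mem_filter => /andP[/andP[ab_lt ab_diag] _] /=.
have [//|abD] := boolP ((a, b) \in D).
have [q qD abq] := D_maximal a b ab_lt ab_diag abD.
by apply/hasP; exists q; rewrite ?mem_ord_pairs ?qD.
Qed.

(* [S] is let-bound so that [vm_compute] evaluates [diagonals n] only once. *)
Definition pred_of_bits n (bs : seq bool) : pred ('I_n * 'I_n) :=
  let S := diagonals n in fun p => nth false bs (index p S).

Definition bits_of_set n (D : {set 'I_n * 'I_n}) : seq bool :=
  [seq p \in D | p <- diagonals n].

Lemma triangulation_bits n (D : {set 'I_n * 'I_n}) :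
  triangulation D -> [in D] = @pred_of_bits n (bits_of_set D).
Proof.
case=> D_diag _ _; apply: functional_extensionality => p; rewrite /pred_of_bits /bits_of_set.
have [p_diag|p_diagN] := boolP (p \in diagonals n).
  by rewrite (nth_map p) ?index_mem // nth_index.
rewrite nth_default ?size_map ?memNindex //.
by apply/negbTE; apply: contra p_diagN => pD; rewrite mem_filter D_diag ?mem_ord_pairs.
Qed.

Fixpoint bool_seqs k : seq (seq bool) :=
  if k is k'.+1 then [seq b :: bs | b <- [:: true; false], bs <- bool_seqs k']
  else [:: [::]].

Lemma mem_bool_seqs bs : bs \in bool_seqs (size bs).
Proof. by elim: bs => [|b bs IH] //=; case: b; rewrite !mem_cat (map_f _ IH) ?orbT. Qed.

Definition triangulation_codes n : seq (seq bool) :=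
  [seq bs <- bool_seqs (size (diagonals n)) | triangulationb (@pred_of_bits n bs)].

Lemma triangulations_certified n m (edge : rel 'I_m) (certs : seq (seq nat * seq nat)) :
  all (fun bs => has (certifies (@pred_of_bits n bs) edge) certs) (triangulation_codes n) ->
  forall D : {set 'I_n * 'I_n}, triangulation D ->
  exists e, has_underlying_graph edge e /\ mut_equiv (tau_quiver D) (Quiver e).
Proof.
move=> /allP certified D D_tri.
have := certified (bits_of_set D).
rewrite mem_filter -(size_map [in D]) mem_bool_seqs -(triangulation_bits D_tri).
rewrite triangulation_triangulationb // => /(_ isT)/hasP[c _].
exact: certifies_mut_equiv.
Qed.

(* Found by a breadth-first search over mutation sequences; the two
   triangulations of the square share their certificate. *)
Definition D4_certificates : seq (seq nat * seq nat) := [:: ([:: 0; 2], [:: 2; 0; 1; 3])]%N.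

Definition E7_certificates : seq (seq nat * seq nat) :=
  [:: ([:: 0; 3; 4; 2; 6], [:: 5; 3; 6; 2; 4; 0; 1]);
      ([:: 0; 4; 5; 2; 6], [:: 3; 4; 6; 2; 5; 0; 1]);
      ([:: 0; 3; 4; 1; 6], [:: 5; 3; 6; 4; 1; 2; 0]);
      ([:: 0; 4; 3; 1; 5], [:: 6; 4; 5; 1; 3; 0; 2]);
      ([:: 0; 5; 6; 2; 4], [:: 3; 5; 4; 2; 6; 0; 1])]%N.

Theorem mainTheorem12 :
  (forall D : {set 'I_4 * 'I_4}, triangulation D ->
     exists e : 'I_4 -> 'I_4 -> int,
       has_underlying_graph D4_edge e /\ mut_equiv (tau_quiver D) (Quiver e)) /\
  (forall D : {set 'I_5 * 'I_5}, triangulation D ->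
     exists e : 'I_7 -> 'I_7 -> int,
       has_underlying_graph E7_edge e /\ mut_equiv (tau_quiver D) (Quiver e)).
Proof.
split.
- by apply: (triangulations_certified (certs := D4_certificates)); vm_compute.
- by apply: (triangulations_certified (certs := E7_certificates)); vm_compute.
Qed.
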